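(* Fix $I_{12},I_{23},I_{31}\in[0,\infty)$. For $(u_1,u_2,u_3)\in\mathcal{U}_E^{123}$, let $\alpha_1,\alpha_2,\alpha_3$ be the inner angles, opposite to sides $l_1,l_2,l_3$ respectively, of the Euclidean triangle with side lengths $l_1,l_2,l_3$. Then at every point of $\mathcal{U}_E^{123}$, the Jacobian matrix $\left(\partial\alpha_i/\partial u_j\right)_{i,j=1}^3$ has: - a zero eigenvalue with eigenvector $(1,1,1)$, and - two negative eigenvalues. In particular, it is negative semi-definite with kernel spanned by $(1,1,1)$.
   Context: Put $r_i=e^{u_i}$ for $i=1,2,3$, and $$l_1^2=r_2^2+r_3^2+2I_{23}r_2r_3,\quad l_2^2=r_3^2+r_1^2+2I_{31}r_3r_1,\quad l_3^2=r_1^2+r_2^2+2I_{12}r_1r_2,$$ with $l_i>0$. The set $\mathcal{U}_E^{123}\subset\mathbb{R}^3$ is the set of $(u_1,u_2,u_3)$ for which $l_1,l_2,l_3$ satisfy the strict triangle inequalities. The Jacobian matrix $\left(\partial\alpha_i/\partial u_j\right)$ is symmetric. *)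

From Stdlib Require Import Reals Lra.
Open Scope R_scope.

(* r_i = e^{u_i} *)
Definition lsq1 (I12 I23 I31 u1 u2 u3 : R) : R :=
  (exp u2)^2 + (exp u3)^2 + 2 * I23 * exp u2 * exp u3.
Definition lsq2 (I12 I23 I31 u1 u2 u3 : R) : R :=
  (exp u3)^2 + (exp u1)^2 + 2 * I31 * exp u3 * exp u1.
Definition lsq3 (I12 I23 I31 u1 u2 u3 : R) : R :=
  (exp u1)^2 + (exp u2)^2 + 2 * I12 * exp u1 * exp u2.

Definition l1 I12 I23 I31 u1 u2 u3 := sqrt (lsq1 I12 I23 I31 u1 u2 u3).
Definition l2 I12 I23 I31 u1 u2 u3 := sqrt (lsq2 I12 I23 I31 u1 u2 u3).
Definition l3 I12 I23 I31 u1 u2 u3 := sqrt (lsq3 I12 I23 I31 u1 u2 u3).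

Definition in_UE (I12 I23 I31 u1 u2 u3 : R) : Prop :=
  let a := l1 I12 I23 I31 u1 u2 u3 in
  let b := l2 I12 I23 I31 u1 u2 u3 in
  let c := l3 I12 I23 I31 u1 u2 u3 in
  0 < a /\ 0 < b /\ 0 < c /\ a < b + c /\ b < c + a /\ c < a + b.

(* inner angle opposite to side a in a Euclidean triangle with sides a b c
   (law of cosines) *)
Definition opp_angle (a b c : R) : R := acos ((b^2 + c^2 - a^2) / (2 * b * c)).

Definition alpha (I12 I23 I31 : R) (i : nat) (u1 u2 u3 : R) : R :=
  let a := l1 I12 I23 I31 u1 u2 u3 in
  let b := l2 I12 I23 I31 u1 u2 u3 in
  let c := l3 I12 I23 I31 u1 u2 u3 in
  match i with
  | 1%nat => opp_angle a b c
  | 2%nat => opp_angle b c a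
  | _ => opp_angle c a b
  end.

Definition alpha_partial_fun (I12 I23 I31 : R) (i j : nat) (u1 u2 u3 : R) : R -> R :=
  fun t => match j with
           | 1%nat => alpha I12 I23 I31 i t u2 u3
           | 2%nat => alpha I12 I23 I31 i u1 t u3
           | _ => alpha I12 I23 I31 i u1 u2 t
           end.

Definition u_coord (j : nat) (u1 u2 u3 : R) : R :=
  match j with 1%nat => u1 | 2%nat => u2 | _ => u3 end.

Definition charpoly3 (J : nat -> nat -> R) (x : R) : R :=
  let a11 := J 1%nat 1%nat - x in let a12 := J 1%nat 2%nat in let a13 := J 1%nat 3%nat in
  let a21 := J 2%nat 1%nat in let a22 := J 2%nat 2%nat - x in let a23 := J 2%nat 3%nat in
  let a31 := J 3%nat 1%nat in let a32 := J 3%nat 2%nat in let a33 := J 3%nat 3%nat - x in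
  a11 * (a22 * a33 - a23 * a32) - a12 * (a21 * a33 - a23 * a31)
  + a13 * (a21 * a32 - a22 * a31).

(* The angles depend on u only through the squared side lengths, and
   ∂(l_k²)/∂u_j = 2 p_kj where l_k² = Σ_j p_kj with p_kj = r_j² + I r_j r_l
   ({j, l} the two vertices of side k).  Differentiating the law of cosines
   expresses the Jacobian through the p_kj.  Its rows sum to zero because the
   angles are scale invariant, and it is symmetric because Σ (p_kj - p_kl) = 0.
   A symmetric 3×3 matrix with zero row sums has characteristic polynomial
   -x (x² - tr·x + 3m), m its leading principal 2×2 minor.  Here
   m = (p12 p23 p31 + p13 p21 p32) / (l1² l2² l3²) > 0, and the diagonal entry
   of a vertex is negative as soon as the two other angles are acute, so both
   nonzero eigenvalues are negative. *)

From Stdlib Require Import Reals Lra Lia.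
From Coquelicot Require Import Coquelicot.
Open Scope R_scope.

Definition is_triangle (a b c : R) : Prop :=
  0 < a /\ 0 < b /\ 0 < c /\ a < b + c /\ b < c + a /\ c < a + b.

Lemma triangle_rot a b c : is_triangle a b c -> is_triangle b c a.
Proof. unfold is_triangle; intuition lra. Qed.

(* Sixteen times the squared area of the triangle with squared sides X, Y, Z. *)
Definition heron (X Y Z : R) : R := 2 * X * Y + 2 * Y * Z + 2 * Z * X - X ^ 2 - Y ^ 2 - Z ^ 2.

Lemma heron_rot X Y Z : heron Y Z X = heron X Y Z.
Proof. unfold heron; ring. Qed.

Lemma heron_sides a b c :
  heron (a ^ 2) (b ^ 2) (c ^ 2) = (a + b + c) * (b + c - a) * (c + a - b) * (a + b - c).
Proof. unfold heron; ring. Qed.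

Lemma heron_pos a b c : is_triangle a b c -> 0 < heron (a ^ 2) (b ^ 2) (c ^ 2).
Proof.
  intros (Ha & Hb & Hc & Hab & Hbc & Hca); rewrite heron_sides.
  repeat apply Rmult_lt_0_compat; lra.
Qed.

Lemma sqrt_pos_inv x : 0 < sqrt x -> 0 < x.
Proof. intros H; apply sqrt_lt_0_alt; rewrite sqrt_0; exact H. Qed.

Lemma one_sub_cos_law_sq a b c : 0 < b -> 0 < c ->
  1 - ((b ^ 2 + c ^ 2 - a ^ 2) / (2 * b * c))² = heron (a ^ 2) (b ^ 2) (c ^ 2) / (2 * b * c) ^ 2.
Proof. intros; unfold heron, Rsqr; field; lra. Qed.

Lemma is_derive_acos x : -1 < x < 1 -> is_derive acos x (-1 / sqrt (1 - x²)).
Proof.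
  intros Hx; apply is_derive_Reals, (derive_pt_eq_1 _ _ _ (derivable_pt_acos _ Hx)).
  apply derive_pt_acos.
Qed.

Definition angle_rate (X Y Z dX dY dZ : R) : R :=
  (dX - dY - dZ + (Y + Z - X) * (dY / (2 * Y) + dZ / (2 * Z))) / sqrt (heron X Y Z).

Lemma derivable_pt_lim_opp_angle (X Y Z : R -> R) (t dX dY dZ : R) :
  derivable_pt_lim X t dX -> derivable_pt_lim Y t dY -> derivable_pt_lim Z t dZ ->
  is_triangle (sqrt (X t)) (sqrt (Y t)) (sqrt (Z t)) ->
  derivable_pt_lim (fun s => opp_angle (sqrt (X s)) (sqrt (Y s)) (sqrt (Z s))) t
    (angle_rate (X t) (Y t) (Z t) dX dY dZ).
Proof.
  intros HX HY HZ Htri; apply is_derive_Reals in HX, HY, HZ.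
  pose proof (heron_pos _ _ _ Htri) as Hh.
  destruct Htri as (Ha & Hb & Hc & _).
  pose proof (sqrt_pos_inv _ Ha); pose proof (sqrt_pos_inv _ Hb); pose proof (sqrt_pos_inv _ Hc).
  rewrite <- (pow2_sqrt (X t)), <- (pow2_sqrt (Y t)), <- (pow2_sqrt (Z t)) by lra.
  remember (sqrt (X t)) as a; remember (sqrt (Y t)) as b; remember (sqrt (Z t)) as c.
  set (cosine := (b ^ 2 + c ^ 2 - a ^ 2) / (2 * b * c)).
  assert (Hsin : sqrt (1 - cosine²) = sqrt (heron (a ^ 2) (b ^ 2) (c ^ 2)) / (2 * b * c)).
  { unfold cosine; rewrite one_sub_cos_law_sq, sqrt_div_alt, sqrt_pow2;
      try nra; apply pow_lt; nra. }
  assert (Hcos : -1 < cosine < 1).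
  { assert (0 < 1 - cosine²).
    { unfold cosine; rewrite one_sub_cos_law_sq by lra.
      apply Rdiv_lt_0_compat; [lra | apply pow_lt; nra]. }
    unfold Rsqr in *; nra. }
  apply is_derive_Reals; unfold opp_angle; auto_derive.
  - subst a b c; repeat split; try (eexists; eassumption); try assumption; try nra.
    eexists; apply is_derive_acos, Hcos.
  - rewrite <- Heqa, <- Heqb, <- Heqc.
    assert (Dacos : forall z, z = cosine -> Derive (fun x => acos x) z = -1 / sqrt (1 - cosine²))
      by (intros z ->; apply is_derive_unique, is_derive_acos, Hcos).
    assert (DX : Derive (fun x : R => X x) t = dX) by (apply is_derive_unique; exact HX).
    assert (DY : Derive (fun x : R => Y x) t = dY) by (apply is_derive_unique; exact HY).
    assert (DZ : Derive (fun x : R => Z x) t = dZ) by (apply is_derive_unique; exact HZ).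
    rewrite Dacos by (unfold cosine; field; lra).
    rewrite DX, DY, DZ, Hsin.
    pose proof (sqrt_lt_R0 _ Hh).
    unfold angle_rate; field; repeat split; lra.
Qed.

(* [Z < X + Y] and [Y < Z + X] say that the angles opposite Z and Y are acute. *)
Lemma angle_rate_neg X Y Z dX dY dZ :
  0 < Y -> 0 < Z -> 0 < heron X Y Z -> dX <= 0 -> 0 < dY -> 0 < dZ ->
  Z < X + Y -> Y < Z + X -> angle_rate X Y Z dX dY dZ < 0.
Proof.
  intros HY HZ Hh HdX HdY HdZ HXY HZX.
  unfold angle_rate; apply Rdiv_neg_pos; [| apply sqrt_lt_R0, Hh].
  replace (dX - dY - dZ + (Y + Z - X) * (dY / (2 * Y) + dZ / (2 * Z)))
    with (dX - (dY * ((X + Y - Z) / (2 * Y)) + dZ * ((Z + X - Y) / (2 * Z))))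
    by (field; lra).
  assert (0 < dY * ((X + Y - Z) / (2 * Y)))
    by (apply Rmult_lt_0_compat; [| apply Rdiv_lt_0_compat]; lra).
  assert (0 < dZ * ((Z + X - Y) / (2 * Z)))
    by (apply Rmult_lt_0_compat; [| apply Rdiv_lt_0_compat]; lra).
  lra.
Qed.

Section Jacobian.

Variables p12 p13 p21 p23 p31 p32 : R.

(* [part k j] is half the rate of change of the squared side [k] along [u_j]. *)
Definition part (k j : nat) : R :=
  match k, j with
  | 1%nat, 2%nat => p12 | 1%nat, 3%nat => p13
  | 2%nat, 1%nat => p21 | 2%nat, 3%nat => p23
  | 3%nat, 1%nat => p31 | 3%nat, 2%nat => p32
  | _, _ => 0
  end.

Definition sq_side (k : nat) : R := part k 1 + part k 2 + part k 3.

Definition jac (i j : nat) : R :=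
  let v k := 2 * part k j in
  match i with
  | 1%nat => angle_rate (sq_side 1) (sq_side 2) (sq_side 3) (v 1%nat) (v 2%nat) (v 3%nat)
  | 2%nat => angle_rate (sq_side 2) (sq_side 3) (sq_side 1) (v 2%nat) (v 3%nat) (v 1%nat)
  | _ => angle_rate (sq_side 3) (sq_side 1) (sq_side 2) (v 3%nat) (v 1%nat) (v 2%nat)
  end.

Hypothesis (h12 : 0 < p12) (h13 : 0 < p13) (h21 : 0 < p21) (h23 : 0 < p23)
  (h31 : 0 < p31) (h32 : 0 < p32).
Hypothesis heron_sq_side : 0 < heron (sq_side 1) (sq_side 2) (sq_side 3).

Let area_pos : 0 < sqrt (heron (sq_side 1) (sq_side 2) (sq_side 3)).
Proof. apply sqrt_lt_R0, heron_sq_side. Qed.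

Lemma sq_side_pos k : (1 <= k <= 3)%nat -> 0 < sq_side k.
Proof. intros Hk; destruct k as [|[|[|[|k]]]]; cbv [sq_side part]; lra || (exfalso; lia). Qed.

Ltac unfold_jac :=
  cbv beta iota zeta delta [jac angle_rate];
  rewrite ?(heron_rot (sq_side 1) (sq_side 2) (sq_side 3)),
          <- ?(heron_rot (sq_side 3) (sq_side 1) (sq_side 2));
  pose proof area_pos;
  set (S := sqrt (heron (sq_side 1) (sq_side 2) (sq_side 3))) in *;
  cbv beta iota delta [sq_side part heron].

Lemma jac_row_sum i : jac i 1 + jac i 2 + jac i 3 = 0.
Proof. destruct i as [|[|[|i]]]; unfold_jac; field; repeat split; intro; lra. Qed.

Lemma jac_minor :
  jac 1 1 * jac 2 2 - jac 1 2 * jac 2 1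
  = (p12 * p23 * p31 + p13 * p21 * p32) / (sq_side 1 * sq_side 2 * sq_side 3).
Proof.
  set (h := heron (sq_side 1) (sq_side 2) (sq_side 3)).
  assert (Hdet : (jac 1 1 * jac 2 2 - jac 1 2 * jac 2 1) * (sqrt h * sqrt h)
    = h * ((p12 * p23 * p31 + p13 * p21 * p32) / (sq_side 1 * sq_side 2 * sq_side 3))).
  { unfold h; unfold_jac; field; repeat split; intro; lra. }
  rewrite sqrt_sqrt in Hdet by (unfold h; lra).
  apply (Rmult_eq_reg_r h); [rewrite Hdet; ring | unfold h; intro; lra].
Qed.

Lemma jac_minor_pos : 0 < jac 1 1 * jac 2 2 - jac 1 2 * jac 2 1.
Proof.
  rewrite jac_minor.
  pose proof (sq_side_pos 1 ltac:(lia)); pose proof (sq_side_pos 2 ltac:(lia));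
  pose proof (sq_side_pos 3 ltac:(lia)).
  apply Rdiv_lt_0_compat; [apply Rplus_lt_0_compat |]; repeat apply Rmult_lt_0_compat; lra.
Qed.

(* At most one angle of a triangle is not acute. *)
Lemma jac_diag_neg : jac 1 1 < 0 \/ jac 2 2 < 0 \/ jac 3 3 < 0.
Proof.
  pose proof (sq_side_pos 1 ltac:(lia)); pose proof (sq_side_pos 2 ltac:(lia));
  pose proof (sq_side_pos 3 ltac:(lia)).
  pose proof (heron_rot (sq_side 1) (sq_side 2) (sq_side 3)).
  pose proof (heron_rot (sq_side 3) (sq_side 1) (sq_side 2)).
  destruct (Rlt_or_le (sq_side 3) (sq_side 1 + sq_side 2)),
    (Rlt_or_le (sq_side 2) (sq_side 3 + sq_side 1)).
  - left; apply angle_rate_neg; cbv [part]; lra.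
  - right; left; apply angle_rate_neg; cbv [part]; lra.
  - right; right; apply angle_rate_neg; cbv [part]; lra.
  - lra.
Qed.

Hypothesis balanced : p12 - p13 + p23 - p21 + p31 - p32 = 0.

Lemma jac_sym : jac 1 2 = jac 2 1 /\ jac 1 3 = jac 3 1 /\ jac 2 3 = jac 3 2.
Proof.
  assert (E : p32 = p12 - p13 + p23 - p21 + p31) by lra.
  unfold_jac; rewrite E; repeat split; field; repeat split; intro; lra.
Qed.

End Jacobian.

Lemma monic_quadratic_neg_roots b c :
  0 < b -> 0 < c -> 4 * c <= b ^ 2 ->
  exists x1 x2, x1 < 0 /\ x2 < 0 /\ forall x, x ^ 2 + b * x + c = (x - x1) * (x - x2).
Proof.
  intros Hb Hc Hdisc.
  set (d := sqrt (b ^ 2 - 4 * c)).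
  assert (Hd : d * d = b ^ 2 - 4 * c) by (apply sqrt_sqrt; lra).
  assert (Hd0 : 0 <= d) by apply sqrt_pos.
  assert (Hdb : d < b) by nra.
  exists ((- b + d) / 2), ((- b - d) / 2); repeat split; try lra.
  intros x; field_simplify; rewrite ?Rmult_1_r; nra.
Qed.

Lemma pos_sum_of_pos_pair_products p q w :
  0 < p * q + q * w + w * p -> 0 < p + q -> 0 < p + q + w.
Proof. intros; nra. Qed.

(* With p, q, w the entries above the diagonal, a symmetric matrix with zero
   row sums has characteristic polynomial -x (x² + 2 (p+q+w) x + 3 (pq+qw+wp)),
   and pq+qw+wp is its leading principal 2×2 minor. *)
Lemma charpoly3_laplacian_neg (J : nat -> nat -> R) :
  J 1%nat 2%nat = J 2%nat 1%nat -> J 1%nat 3%nat = J 3%nat 1%nat ->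
  J 2%nat 3%nat = J 3%nat 2%nat ->
  (forall i, (1 <= i <= 3)%nat -> J i 1%nat + J i 2%nat + J i 3%nat = 0) ->
  0 < J 1%nat 1%nat * J 2%nat 2%nat - J 1%nat 2%nat * J 2%nat 1%nat ->
  J 1%nat 1%nat < 0 \/ J 2%nat 2%nat < 0 \/ J 3%nat 3%nat < 0 ->
  exists lam2 lam3, lam2 < 0 /\ lam3 < 0 /\
    forall x, charpoly3 J x = - x * (x - lam2) * (x - lam3).
Proof.
  intros S12 S13 S23 Hrow Hminor Hdiag.
  pose proof (Hrow 1%nat ltac:(lia)); pose proof (Hrow 2%nat ltac:(lia));
  pose proof (Hrow 3%nat ltac:(lia)).
  set (p := J 1%nat 2%nat) in *; set (q := J 1%nat 3%nat) in *; set (w := J 2%nat 3%nat) in *.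
  assert (E11 : J 1%nat 1%nat = - (p + q)) by lra.
  assert (E22 : J 2%nat 2%nat = - (p + w)) by lra.
  assert (E33 : J 3%nat 3%nat = - (q + w)) by lra.
  assert (He : 0 < p * q + q * w + w * p) by (rewrite E11, E22, <- S12 in Hminor; nra).
  assert (Hs : 0 < p + q + w).
  { destruct Hdiag as [Hd|[Hd|Hd]].
    - apply pos_sum_of_pos_pair_products; lra.
    - replace (p + q + w) with (p + w + q) by ring; apply pos_sum_of_pos_pair_products; lra.
    - replace (p + q + w) with (q + w + p) by ring; apply pos_sum_of_pos_pair_products; lra. }
  assert (Hdisc : 4 * (3 * (p * q + q * w + w * p)) <= (2 * (p + q + w)) ^ 2)
    by (pose proof (pow2_ge_0 (p - q)); pose proof (pow2_ge_0 (q - w));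
        pose proof (pow2_ge_0 (w - p)); nra).
  destruct (monic_quadratic_neg_roots (2 * (p + q + w)) (3 * (p * q + q * w + w * p))
              ltac:(lra) ltac:(lra) Hdisc)
    as (x1 & x2 & Hx1 & Hx2 & Hfac).
  exists x1, x2; repeat split; try assumption.
  intros x; rewrite Rmult_assoc, <- Hfac.
  unfold charpoly3; cbv zeta; rewrite E11, E22, E33, <- S12, <- S13, <- S23;
    unfold p, q, w; ring.
Qed.

Definition inv_dist_sq (I a b : R) : R := a ^ 2 + b ^ 2 + 2 * I * a * b.

(* For circles of radii a, b at squared distance [inv_dist_sq I a b], this is
   the distance of the centres times the distance from the first centre to the
   radical axis. *)
Definition power_part (I a b : R) : R := a ^ 2 + I * a * b.

Lemma power_part_pos I a b : 0 <= I -> 0 < a -> 0 < b -> 0 < power_part I a b.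
Proof.
  intros HI Ha Hb; unfold power_part.
  pose proof (Rmult_le_pos _ _ HI (Rlt_le _ _ (Rmult_lt_0_compat _ _ Ha Hb))); nra.
Qed.

Lemma derivable_pt_lim_inv_dist_sq_l I b t :
  derivable_pt_lim (fun s => inv_dist_sq I (exp s) b) t (2 * power_part I (exp t) b).
Proof. apply is_derive_Reals; unfold inv_dist_sq, power_part; auto_derive; [trivial | ring]. Qed.

Lemma derivable_pt_lim_inv_dist_sq_r I a t :
  derivable_pt_lim (fun s => inv_dist_sq I a (exp s)) t (2 * power_part I (exp t) a).
Proof. apply is_derive_Reals; unfold inv_dist_sq, power_part; auto_derive; [trivial | ring]. Qed.

Lemma derivable_pt_lim_eq_value f x l l' :
  derivable_pt_lim f x l -> l = l' -> derivable_pt_lim f x l'.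
Proof. now intros H <-. Qed.

Definition jacobian_at (I12 I23 I31 u1 u2 u3 : R) : nat -> nat -> R :=
  let r1 := exp u1 in let r2 := exp u2 in let r3 := exp u3 in
  jac (power_part I23 r2 r3) (power_part I23 r3 r2) (power_part I31 r1 r3)
      (power_part I31 r3 r1) (power_part I12 r1 r2) (power_part I12 r2 r1).

Lemma derivable_pt_lim_alpha I12 I23 I31 u1 u2 u3 i j :
  in_UE I12 I23 I31 u1 u2 u3 -> (1 <= i <= 3)%nat -> (1 <= j <= 3)%nat ->
  derivable_pt_lim (alpha_partial_fun I12 I23 I31 i j u1 u2 u3) (u_coord j u1 u2 u3)
    (jacobian_at I12 I23 I31 u1 u2 u3 i j).
Proof.
  intros hU Hi Hj.
  destruct i as [|[|[|[|i]]]]; try (exfalso; lia);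
    destruct j as [|[|[|[|j]]]]; try (exfalso; lia);
    cbn [alpha_partial_fun alpha u_coord]; unfold l1, l2, l3;
    (eapply derivable_pt_lim_eq_value;
      [ apply derivable_pt_lim_opp_angle;
        [ .. | first [ exact hU | apply triangle_rot, hU | apply triangle_rot, triangle_rot, hU ] ]
      | ]).
  all: try first [ apply derivable_pt_lim_const | apply derivable_pt_lim_inv_dist_sq_l
                 | apply derivable_pt_lim_inv_dist_sq_r ].
  all: cbv beta iota zeta delta [jacobian_at jac]; f_equal;
       cbv [sq_side part lsq1 lsq2 lsq3 power_part]; ring.
Qed.

Lemma heron_lsq_pos I12 I23 I31 u1 u2 u3 :
  in_UE I12 I23 I31 u1 u2 u3 ->
  0 < heron (lsq1 I12 I23 I31 u1 u2 u3) (lsq2 I12 I23 I31 u1 u2 u3) (lsq3 I12 I23 I31 u1 u2 u3).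
Proof.
  intros hU; pose proof (heron_pos _ _ _ hU) as Hh.
  destruct hU as (Ha & Hb & Hc & _); unfold l1, l2, l3 in *.
  rewrite !pow2_sqrt in Hh by (apply Rlt_le, sqrt_pos_inv; assumption).
  exact Hh.
Qed.

Theorem lemma2p4 (I12 I23 I31 : R)
  (h12 : 0 <= I12) (h23 : 0 <= I23) (h31 : 0 <= I31)
  (u1 u2 u3 : R) (hU : in_UE I12 I23 I31 u1 u2 u3) :
  exists J : nat -> nat -> R,
    (forall i j : nat, (1 <= i <= 3)%nat -> (1 <= j <= 3)%nat ->
       derivable_pt_lim (alpha_partial_fun I12 I23 I31 i j u1 u2 u3)
                        (u_coord j u1 u2 u3) (J i j)) /\
    (forall i : nat, (1 <= i <= 3)%nat ->
       J i 1%nat + J i 2%nat + J i 3%nat = 0) /\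
    (exists lam2 lam3 : R, lam2 < 0 /\ lam3 < 0 /\
       forall x : R, charpoly3 J x = - x * (x - lam2) * (x - lam3)).
Proof.
  exists (jacobian_at I12 I23 I31 u1 u2 u3).
  split; [intros i j Hi Hj; now apply derivable_pt_lim_alpha |].
  pose proof (heron_lsq_pos _ _ _ _ _ _ hU) as Hh.
  pose proof (exp_pos u1); pose proof (exp_pos u2); pose proof (exp_pos u3).
  unfold jacobian_at; cbv zeta.
  set (p12 := power_part I23 (exp u2) (exp u3)); set (p13 := power_part I23 (exp u3) (exp u2)).
  set (p21 := power_part I31 (exp u1) (exp u3)); set (p23 := power_part I31 (exp u3) (exp u1)).
  set (p31 := power_part I12 (exp u1) (exp u2)); set (p32 := power_part I12 (exp u2) (exp u1)).
  assert (0 < p12 /\ 0 < p13 /\ 0 < p21 /\ 0 < p23 /\ 0 < p31 /\ 0 < p32)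
    as (P12 & P13 & P21 & P23 & P31 & P32) by (repeat split; apply power_part_pos; assumption).
  assert (Hheron : 0 < heron (sq_side p12 p13 p21 p23 p31 p32 1)
                     (sq_side p12 p13 p21 p23 p31 p32 2) (sq_side p12 p13 p21 p23 p31 p32 3)).
  { eapply Rlt_le_trans; [exact Hh | right; f_equal];
      cbv [sq_side part p12 p13 p21 p23 p31 p32 power_part lsq1 lsq2 lsq3]; ring. }
  assert (Hbal : p12 - p13 + p23 - p21 + p31 - p32 = 0)
    by (unfold p12, p13, p21, p23, p31, p32, power_part; ring).
  destruct (jac_sym p12 p13 p21 p23 p31 p32) as (S12 & S13 & S23); try assumption.
  split; [intros i _; apply jac_row_sum; assumption |].
  apply charpoly3_laplacian_neg; try assumption.
  - intros i _; apply jac_row_sum; assumption.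
  - apply jac_minor_pos; assumption.
  - apply jac_diag_neg; assumption.
Qed.
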